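(* For every $\theta\in V_\Lambda$, $\mathcal P(\theta)^\perp=\overline{\mathcal Q}(\theta)$ and ${}^\perp\overline{\mathcal Q}(\theta)=\mathcal P(\theta)$. In particular, if $\mathcal W(\theta)=\{0\}$ then $\overline{\mathcal Q}(\theta)=\mathcal Q(\theta)$, so $\mathcal Q(\theta)=\mathcal P(\theta)^\perp$ and $\mathcal P(\theta)={}^\perp\mathcal Q(\theta)$.
   Context: Let $\Lambda$ be a finite dimensional algebra over a field with $n$ isoclasses of simple modules, and $\mathrm{mod}\text-\Lambda$ the category of finitely generated right $\Lambda$-modules. Fix a torsion class $\mathcal G\subseteq\mathrm{mod}\text-\Lambda$ (closed under isomorphisms, extensions and quotients). For $B\in\mathcal G$, a subobject of $B$ is a submodule in $\mathcal G$; a subobject $A\subseteq B$ is strict if $A\cap B'\in\mathcal G$ for every subobject $B'$ of $B$; a strict quotient of $B$ is $B/A$ with $A$ a strict subobject. A strict morphism is a homomorphism $f:A\to B$ with $A,B\in\mathcal G$ such that $\ker f\in\mathcal G$ is a strict subobject of $A$ and $\operatorname{im} f$ is a strict subobject of $B$. For $\mathcal X\subseteq\mathcal G$, $\mathcal X^\perp$ is the class of $Y\in\mathcal G$ such that every strict morphism $X\to Y$ with $X\in\mathcal X$ is zero, and ${}^\perp\mathcal X$ is the class of $Y\in\mathcal G$ such that every strict morphism $Y\to X$ with $X\in\mathcal X$ is zero. Let $V_\Lambda=\mathrm{Hom}_{\mathbb Z}(K_0\Lambda,\mathbb R)\cong\mathbb R^n$; $\theta(M)$ denotes $\theta$ applied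 to the dimension vector of $M$. Define: $\mathcal P(\theta)$ = $\{0\}$ together with all nonzero $M\in\mathcal G$ with $\theta(M'')>0$ for every nonzero strict quotient $M''$ of $M$ (including $M$); $\mathcal Q(\theta)$ = $\{0\}$ together with all nonzero $N\in\mathcal G$ with $\theta(N')<0$ for every nonzero strict subobject $N'$ of $N$ (including $N$); $\overline{\mathcal Q}(\theta)$ = all $N\in\mathcal G$ with $\theta(N')\le0$ for every strict subobject $N'$ of $N$. For $M\in\mathcal G$, $D_{\mathcal G}(M)$ is the set of $\theta$ with $\theta(M)=0$ and $\theta(M')\le0$ for all strict subobjects $M'$ of $M$, and $\mathcal W(\theta)$ is the class of $X\in\mathcal G$ with $\theta\in D_{\mathcal G}(X)$. *)

From HB Require Import structures.
From mathcomp Require Import all_boot all_order all_algebra falgebra.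
From mathcomp Require Import reals.
Set Implicit Arguments. Unset Strict Implicit. Unset Printing Implicit Defensive.
Import Order.TTheory GRing.Theory Num.Theory.
Local Open Scope ring_scope.

(* A finitely generated right module over a finite-dimensional F-algebra
   Lam is a finite-dimensional F-space F^d (row vectors) with a right action
   v . a := v *m ract a. *)
Record rmod (F : fieldType) (Lam : falgType F) := RMod {
  rdim : nat;
  ract : Lam -> 'M[F]_rdim }.

Definition is_rmod (F : fieldType) (Lam : falgType F) (M : rmod Lam) : Prop :=
  [/\ forall (k : F) (a b : Lam), ract M (k *: a + b) = k *: ract M a + ract M b,
      ract M 1 = 1%:M
    & forall a b : Lam, ract M (a * b) = ract M a *m ract M b].

Definition submod (F : fieldType) (Lam : falgType F) (M : rmod Lam) k
  (U : 'M[F]_(k, rdim M)) : Prop :=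
  forall a : Lam, (U *m ract M a <= U)%MS.

(* f : N -> M is an isomorphism of N onto the subquotient U/V of M
   (V <= U submodules of M) *)
Definition sq_iso (F : fieldType) (Lam : falgType F) (N M : rmod Lam) k l
  (U : 'M[F]_(k, rdim M)) (V : 'M[F]_(l, rdim M)) (f : 'M[F]_(rdim N, rdim M))
  : Prop :=
  [/\ forall a : Lam, (ract N a *m f - f *m ract M a <= V)%MS,
      (f + V == U)%MS
    & \rank (f + V)%MS = (rdim N + \rank V)%N].
Arguments sq_iso {F Lam} N M {k l} U V f.

Definition inG (F : fieldType) (Lam : falgType F) (G : rmod Lam -> Prop)
  (M : rmod Lam) k l (U : 'M[F]_(k, rdim M)) (V : 'M[F]_(l, rdim M)) : Prop :=
  exists (N : rmod Lam) (f : 'M[F]_(rdim N, rdim M)),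
    [/\ is_rmod N, G N & sq_iso N M U V f].
Arguments inG {F Lam} G M {k l} U V.

(* G is a torsion class: closed under isomorphisms, quotients, extensions *)
Definition torsion_class (F : fieldType) (Lam : falgType F)
  (G : rmod Lam -> Prop) : Prop :=
  [/\ (forall (M N : rmod Lam) (f : 'M[F]_(rdim M, rdim N)),
         is_rmod M -> is_rmod N -> G M ->
         sq_iso M N (1%:M : 'M[F]_(rdim N)) (0 : 'M[F]_(rdim N)) f -> G N),
      (forall (M : rmod Lam) k (U : 'M[F]_(k, rdim M)),
         is_rmod M -> G M -> submod U -> inG G M (1%:M : 'M[F]_(rdim M)) U)
    & (forall (M : rmod Lam) k (U : 'M[F]_(k, rdim M)),
         is_rmod M -> submod U -> inG G M U (0 : 'M[F]_(rdim M)) ->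
         inG G M (1%:M : 'M[F]_(rdim M)) U -> G M)].

(* theta in V_Lam = Hom(K_0(mod Lam), R): an additive function on short exact
   sequences 0 -> N1 -> M -> N2 -> 0 (this is the universal property of K_0). *)
Definition additive_fun (F : fieldType) (Lam : falgType F) (R : realType)
  (theta : rmod Lam -> R) : Prop :=
  forall (M N1 N2 : rmod Lam) k (U : 'M[F]_(k, rdim M))
         (f1 : 'M[F]_(rdim N1, rdim M)) (f2 : 'M[F]_(rdim N2, rdim M)),
    is_rmod M -> is_rmod N1 -> is_rmod N2 -> submod U ->
    sq_iso N1 M U (0 : 'M[F]_(rdim M)) f1 ->
    sq_iso N2 M (1%:M : 'M[F]_(rdim M)) U f2 ->
    theta M = theta N1 + theta N2.

Section Notions.
Context (F : fieldType) (Lam : falgType F) (G : rmod Lam -> Prop).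

Definition subobj (B : rmod Lam) k (U : 'M[F]_(k, rdim B)) : Prop :=
  submod U /\ inG G B U (0 : 'M[F]_(rdim B)).

Definition strict_sub (B : rmod Lam) k (U : 'M[F]_(k, rdim B)) : Prop :=
  subobj U /\
  forall l (B' : 'M[F]_(l, rdim B)), subobj B' ->
    inG G B (U :&: B')%MS (0 : 'M[F]_(rdim B)).

Definition strict_morph (X Y : rmod Lam) (f : 'M[F]_(rdim X, rdim Y)) : Prop :=
  [/\ G X, G Y, forall a : Lam, ract X a *m f = f *m ract Y a,
      strict_sub (kermx f) & strict_sub f].

Definition perp (C : rmod Lam -> Prop) (Y : rmod Lam) : Prop :=
  G Y /\ forall (X : rmod Lam) (f : 'M[F]_(rdim X, rdim Y)),
    is_rmod X -> C X -> strict_morph f -> f = 0.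

Definition lperp (C : rmod Lam -> Prop) (Y : rmod Lam) : Prop :=
  G Y /\ forall (X : rmod Lam) (f : 'M[F]_(rdim Y, rdim X)),
    is_rmod X -> C X -> strict_morph f -> f = 0.

Context (R : realType) (theta : rmod Lam -> R).

Definition Pcl (M : rmod Lam) : Prop :=
  G M /\
  (rdim M = 0%N \/
   forall k (A : 'M[F]_(k, rdim M)), strict_sub A -> ~~ row_full A ->
     forall (N : rmod Lam) (f : 'M[F]_(rdim N, rdim M)),
       is_rmod N -> sq_iso N M (1%:M : 'M[F]_(rdim M)) A f -> 0 < theta N).

Definition Qcl (M : rmod Lam) : Prop :=
  G M /\
  (rdim M = 0%N \/
   forall k (A : 'M[F]_(k, rdim M)), strict_sub A -> A != 0 ->
     forall (N : rmod Lam) (f : 'M[F]_(rdim N, rdim M)),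
       is_rmod N -> sq_iso N M A (0 : 'M[F]_(rdim M)) f -> theta N < 0).

Definition Qbar (M : rmod Lam) : Prop :=
  G M /\
  forall k (A : 'M[F]_(k, rdim M)), strict_sub A ->
    forall (N : rmod Lam) (f : 'M[F]_(rdim N, rdim M)),
      is_rmod N -> sq_iso N M A (0 : 'M[F]_(rdim M)) f -> theta N <= 0.

(* W(theta): X in G with theta in D_G(X) *)
Definition Wcl (M : rmod Lam) : Prop := Qbar M /\ theta M = 0.

End Notions.

From HB Require Import structures.
From mathcomp Require Import all_boot all_order all_algebra falgebra.
From mathcomp Require Import reals.
From mathcomp Require Import zify lra.
Import Order.TTheory GRing.Theory Num.Theory.
Local Open Scope ring_scope.
Set Implicit Arguments. Unset Strict Implicit. Unset Printing Implicit Defensive.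

(* A nonzero strict morphism f : X -> Y has a strict image, which is at once a strict
   quotient of X (so of positive theta if X is in P(theta)) and a strict subobject of Y
   (so of nonpositive theta if Y is in Qbar(theta)); hence P and Qbar are orthogonal.
   Conversely, if Y in P^perp had a strict subobject of positive theta, one of minimal
   rank would lie in P(theta), since its proper strict subobjects are strict in Y, and
   its inclusion into Y would be a nonzero strict morphism.  Dually, if X in
   ^perp Qbar had a proper strict quotient X/A with theta <= 0, take A of minimal
   codimension: preimages in X of strict subobjects of X/A are strict, so X/A lies in
   Qbar(theta), and X -> X/A is a nonzero strict morphism.  When W(theta) = 0, a
   nonzero strict subobject of theta 0 of some N in Qbar(theta) would lie in W(theta),
   so Qbar(theta) = Q(theta). *)

Section MatrixFacts.
Variable F : fieldType.

Lemma submx_mulmxr_ker n p m1 m2 m3 (x : 'M[F]_(m1, n)) (U : 'M_(m2, n))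
    (W : 'M_(m3, n)) (f : 'M_(n, p)) :
  (x <= U)%MS -> (W <= U)%MS -> (U :&: kermx f <= W)%MS ->
  (x *m f <= W *m f)%MS -> (x <= W)%MS.
Proof.
move=> xU WU kerW /submxP[D eD].
have -> : x = (x - D *m W) + D *m W by rewrite subrK.
rewrite addmx_sub ?submxMl //; apply: submx_trans kerW.
rewrite sub_capmx addmx_sub ?eqmx_opp ?xU ?(submx_trans (submxMl _ _) WU) //=.
by apply/sub_kermxP; rewrite mulmxBl -mulmxA -eD subrr.
Qed.

Lemma capmxMfree m1 m2 n p (A : 'M[F]_(m1, n)) (B : 'M_(m2, n)) (C : 'M_(n, p)) :
  row_free C -> ((A :&: B) *m C :=: A *m C :&: B *m C)%MS.
Proof.
move=> freeC; apply/eqmxP; rewrite capmxMr /=.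
set x := (A *m C :&: B *m C)%MS.
have xC : (x <= C)%MS by apply: submx_trans (capmxSl _ _) (submxMl _ _).
rewrite -(mulmxKpV xC) submxMr // sub_capmx -!(submxMfree _ _ freeC) mulmxKpV //.
by rewrite capmxSl capmxSr.
Qed.

Lemma capmx_kermx_free m1 m2 n p (U : 'M[F]_(m1, n)) (V : 'M_(m2, n)) (f : 'M_(n, p)) :
  row_free f -> (U :&: kermx f <= V)%MS.
Proof. by rewrite -kermx_eq0 => /eqP ->; rewrite capmx0 sub0mx. Qed.

(* [q] is the projection onto the first block of coordinates in the basis
   [col_mx g (row_base A)] of the whole space. *)
Lemma complement_projection n0 n k (g : 'M[F]_(n0, n)) (A : 'M_(k, n)) :
  (g + A :=: 1%:M)%MS -> \rank (g + A) = (n0 + \rank A)%N ->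
  exists q : 'M_(n, n0),
    [/\ g *m q = 1%:M, A *m q = 0 & (1%:M - q *m g <= A)%MS].
Proof.
move=> egA rk; set r := \rank A.
pose B : 'M_(n0 + r, n) := col_mx g (row_base A).
have eB : (B :=: 1%:M)%MS.
  apply: eqmx_trans (eqmx_sym (addsmxE _ _)) _.
  exact: eqmx_trans (adds_eqmx (eqmx_refl g) (eq_row_base A)) egA.
have fullB : row_full B by rewrite /row_full eB mxrank1.
have freeB : row_free B by rewrite /row_free eB -rk egA.
pose P := pinvmx B.
have [gP rbP] : g *m P = row_mx 1%:M 0 /\ row_base A *m P = row_mx 0 1%:M.
  by move: (mulmxVp freeB); rewrite mul_col_mx scalar_mx_block => /eq_col_mx.
pose q := P *m col_mx (1%:M : 'M_n0) (0 : 'M_(r, n0)).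
have rbq : row_base A *m q = 0 by rewrite mulmxA rbP mul_row_col mul0mx mulmx0 addr0.
exists q; split.
- by rewrite mulmxA gP mul_row_col mulmx1 mul0mx addr0.
- have AR : (A <= row_base A)%MS by rewrite eq_row_base.
  by rewrite -(mulmxKpV AR) -mulmxA rbq mulmx0.
- have -> : 1%:M - q *m g = P *m col_mx 0 (row_base A).
    rewrite -(mulVpmx fullB) /q -mulmxA -mulmxBr mul_col_mx mul1mx mul0mx.
    by rewrite opp_col_mx add_col_mx subrr oppr0 addr0.
  by apply: mulmx_sub; rewrite col_mx_sub sub0mx eq_row_base submx_refl.
Qed.

Lemma capmx_preimage n0 n k kc l (g : 'M[F]_(n0, n)) (q : 'M_(n, n0))
    (A : 'M_(k, n)) (C : 'M_(kc, n0)) (B : 'M_(l, n)) :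
  g *m q = 1%:M -> A *m q = 0 -> (1%:M - q *m g <= A)%MS ->
  (((C *m g + A) :&: B) *m q :=: C :&: B *m q)%MS.
Proof.
move=> gq Aq qgA; apply/eqmxP; apply/andP; split.
  rewrite sub_capmx submxMr ?capmxSr // andbT.
  apply: submx_trans (submxMr _ (capmxSl _ _)) _.
  by rewrite addsmxMr -mulmxA gq mulmx1 Aq addsmx0.
set Y := (C :&: B *m q)%MS.
have YBq : (Y <= B *m q)%MS by apply: capmxSr.
set b := Y *m pinvmx (B *m q) *m B.
have bq : b *m q = Y by rewrite -mulmxA mulmxKpV.
rewrite -bq submxMr // sub_capmx submxMl andbT.
have -> : b = b *m q *m g + b *m (1%:M - q *m g).
  by rewrite mulmxBr mulmx1 -mulmxA addrC subrK.
rewrite addmx_sub ?(submx_trans (mulmx_sub _ qgA) (addsmxSr _ _)) //.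
by rewrite bq; apply: submx_trans (addsmxSl _ _); apply: submxMr; apply: capmxSl.
Qed.

Lemma mxrank_mulmxr_quot n p k l (U : 'M[F]_(k, n))
    (V : 'M_(l, n)) (f : 'M_(n, p)) :
  (V <= U)%MS -> (U :&: kermx f <= V)%MS ->
  (\rank (U *m f) + \rank V = \rank U + \rank (V *m f))%N.
Proof.
move=> VU kerV; have eU := mxrank_mul_ker U f; have eV := mxrank_mul_ker V f.
have eK : (V :&: kermx f :=: U :&: kermx f)%MS.
  apply/eqmxP; rewrite !sub_capmx capmxSr (submx_trans (capmxSl _ _) VU).
  by rewrite kerV capmxSr.
by move: eU eV; rewrite eK; lia.
Qed.

Lemma sub0col m1 m2 (A : 'M[F]_(m1, 0)) (B : 'M_(m2, 0)) : (A <= B)%MS.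
Proof. by apply: submx_full; rewrite /row_full eqn_leq rank_leq_col. Qed.

Lemma mxrank0col m (A : 'M[F]_(m, 0)) : \rank A = 0%N.
Proof. by apply/eqP; rewrite -leqn0 rank_leq_col. Qed.

End MatrixFacts.

Section Subquotients.
Variables (F : fieldType) (Lam : falgType F).
Implicit Types (M N X Y K : rmod Lam).

Definition mod_hom X Y (f : 'M[F]_(rdim X, rdim Y)) :=
  forall a : Lam, ract X a *m f = f *m ract Y a.

Lemma submod_eqmx M k k' (U : 'M[F]_(k, rdim M)) (U' : 'M_(k', rdim M)) :
  (U :=: U')%MS -> submod U -> submod U'.
Proof. by move=> eU sU a; rewrite -eU -(eqmxMr _ eU). Qed.

Lemma submod_cap M k l (U : 'M[F]_(k, rdim M)) (V : 'M_(l, rdim M)) :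
  submod U -> submod V -> submod (U :&: V)%MS.
Proof.
move=> sU sV a; rewrite sub_capmx.
rewrite (submx_trans (submxMr _ (capmxSl _ _)) (sU a)).
by rewrite (submx_trans (submxMr _ (capmxSr _ _)) (sV a)).
Qed.

Lemma submod1 M : submod (1%:M : 'M[F]_(rdim M)).
Proof. by move=> a; rewrite submx1. Qed.

Lemma submod0 M k : submod (0 : 'M[F]_(k, rdim M)).
Proof. by move=> a; rewrite mul0mx sub0mx. Qed.

Lemma submod_mulmxr X Y k (U : 'M[F]_(k, rdim X)) (f : 'M_(rdim X, rdim Y)) :
  mod_hom f -> submod U -> submod (U *m f).
Proof. by move=> hf sU a; rewrite -mulmxA -hf mulmxA submxMr. Qed.

Lemma submod_kermx X Y (f : 'M[F]_(rdim X, rdim Y)) : mod_hom f -> submod (kermx f).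
Proof. by move=> hf a; apply/sub_kermxP; rewrite -mulmxA hf mulmxA mulmx_ker mul0mx. Qed.

Lemma submod_pinvmx X Y k (V : 'M[F]_(k, rdim Y)) (h : 'M_(rdim X, rdim Y)) :
  mod_hom h -> row_free h -> submod V -> (V <= h)%MS -> submod (V *m pinvmx h).
Proof.
move=> hh freeh sV Vh a; rewrite -(submxMfree _ _ freeh) -mulmxA hh mulmxA.
by rewrite mulmxKpV.
Qed.

Lemma sq_iso_eqmx N M k l k' l' (U : 'M[F]_(k, rdim M)) (V : 'M_(l, rdim M))
    (U' : 'M_(k', rdim M)) (V' : 'M_(l', rdim M)) f :
  (U :=: U')%MS -> (V :=: V')%MS -> sq_iso N M U V f -> sq_iso N M U' V' f.
Proof.
move=> eU eV [hom /eqmxP eUf rk]; have eV' := adds_eqmx (eqmx_refl f) eV.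
split; first by move=> a; rewrite -eV.
  by apply/eqmxP; apply: eqmx_trans (eqmx_sym eV') (eqmx_trans eUf eU).
by rewrite -eV' -eV.
Qed.

Lemma sq_iso_subV N M k l (U : 'M[F]_(k, rdim M)) (V : 'M_(l, rdim M)) f :
  sq_iso N M U V f -> (V <= U)%MS.
Proof. by case=> _ /andP[h _] _; apply: submx_trans h; rewrite addsmxSr. Qed.

Lemma sq_iso_rank N M k l (U : 'M[F]_(k, rdim M)) (V : 'M_(l, rdim M)) f :
  sq_iso N M U V f -> \rank U = (rdim N + \rank V)%N.
Proof. by case=> _ /eqmxP e <-; rewrite e. Qed.

Section SubobjectIso.
Variables (N M : rmod Lam) (k : nat) (U : 'M[F]_(k, rdim M)).
Variable h : 'M[F]_(rdim N, rdim M).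
Hypothesis si : sq_iso N M U (0 : 'M_(rdim M)) h.

Lemma sq_iso0_hom : mod_hom h.
Proof. by case: si => hom _ _ a; apply/eqP; rewrite -subr_eq0 -submx0. Qed.

Lemma sq_iso0_eqmx : (h :=: U)%MS.
Proof. by case: si => _ /eqmxP e _; apply: eqmx_trans e; apply/eqmx_sym/addsmx0. Qed.

Lemma sq_iso0_rank : \rank U = rdim N.
Proof. by rewrite (sq_iso_rank si) mxrank0 addn0. Qed.

Lemma sq_iso0_row_free : row_free h.
Proof. by rewrite /row_free sq_iso0_eqmx sq_iso0_rank. Qed.

Lemma sq_iso0_kermx : kermx h = 0.
Proof. by apply/eqP; rewrite kermx_eq0 sq_iso0_row_free. Qed.

Lemma sq_iso0_submod : submod U.
Proof.
apply: submod_eqmx sq_iso0_eqmx _; rewrite -[h]mul1mx.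
exact: submod_mulmxr sq_iso0_hom (@submod1 _).
Qed.

End SubobjectIso.

Lemma sq_iso1_rank N M k (U : 'M[F]_(k, rdim M)) h :
  sq_iso N M 1%:M U h -> rdim M = (rdim N + \rank U)%N.
Proof. by move/sq_iso_rank; rewrite mxrank1. Qed.

Lemma sq_isoMr X Y K k l (f : 'M[F]_(rdim X, rdim Y)) (U : 'M_(k, rdim X))
    (V : 'M_(l, rdim X)) h :
  mod_hom f -> sq_iso K X U V h -> (U :&: kermx f <= V)%MS ->
  sq_iso K Y (U *m f) (V *m f) (h *m f).
Proof.
move=> hf si kerV; have VU := sq_iso_subV si; have rk := sq_iso_rank si.
have rkf := mxrank_mulmxr_quot VU kerV.
case: si => hom /eqmxP eU _.
have ehf : (h *m f + V *m f :=: U *m f)%MS.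
  exact: eqmx_trans (eqmx_sym (addsmxMr _ _ _)) (eqmxMr _ eU).
split; last by rewrite ehf; lia.
- move=> a; have -> : h *m f *m ract Y a = h *m ract X a *m f.
    by rewrite -mulmxA -hf mulmxA.
  by rewrite mulmxA -mulmxBl submxMr.
- exact/eqmxP.
Qed.

Lemma sq_iso0_trans K N M k k' (A : 'M[F]_(k, rdim M)) (A' : 'M_(k', rdim N)) h h' :
  sq_iso N M A (0 : 'M_(rdim M)) h -> sq_iso K N A' (0 : 'M_(rdim N)) h' ->
  sq_iso K M (A' *m h) (0 : 'M_(rdim M)) (h' *m h).
Proof.
move=> si si'; have kerh := capmx_kermx_free A' (0 : 'M_(rdim N)) (sq_iso0_row_free si).
apply: sq_iso_eqmx (eqmx_refl _) _ (sq_isoMr (sq_iso0_hom si) si' kerh).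
by rewrite mul0mx; apply: eqmx0.
Qed.

Lemma sq_isoMr_lift X Y K k l (f : 'M[F]_(rdim X, rdim Y)) (U : 'M_(k, rdim X))
    (V : 'M_(l, rdim X)) h :
  mod_hom f -> submod U -> (V <= U)%MS -> (U :&: kermx f <= V)%MS ->
  sq_iso K Y (U *m f) (V *m f) h -> exists h', sq_iso K X U V h'.
Proof.
move=> hf sU VU kerV si; have rk := sq_iso_rank si.
have rkf := mxrank_mulmxr_quot VU kerV.
case: si => hom /eqmxP eUf _.
set h' := h *m pinvmx (U *m f) *m U.
have eh : h' *m f = h.
  by rewrite /h' -mulmxA mulmxKpV // -eUf addsmxSl.
have h'U : (h' <= U)%MS by rewrite submxMl.
have eh'V : (h' + V :=: U)%MS.
  apply/eqmxP; rewrite addsmx_sub h'U VU /=.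
  apply: (submx_mulmxr_ker (U := U) (f := f)) => //.
  - by rewrite addsmx_sub h'U VU.
  - exact: submx_trans kerV (addsmxSr _ _).
  - by rewrite addsmxMr eh -eUf.
exists h'; split; last by rewrite eh'V; lia.
- move=> a; apply: (submx_mulmxr_ker (U := U) (f := f)) => //.
    rewrite addmx_sub ?eqmx_opp ?(submx_trans (submxMl _ _) h'U) //.
    exact: submx_trans (submxMr _ h'U) (sU a).
  rewrite mulmxBl -mulmxA eh.
  have -> : h' *m ract X a *m f = h *m ract Y a by rewrite -mulmxA hf mulmxA eh.
  exact: hom.
- by apply/eqmxP.
Qed.

End Subquotients.

Section Constructions.
Variables (F : fieldType) (Lam : falgType F).
Implicit Types (M N X Y K : rmod Lam).

Definition rmod0 : rmod Lam := @RMod F Lam 0 (fun _ => 0).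

Lemma rmod0_rmod : is_rmod rmod0.
Proof. by split => *; rewrite [LHS]flatmx0 [RHS]flatmx0. Qed.

Definition subrmod M k (U : 'M[F]_(k, rdim M)) : rmod Lam :=
  @RMod F Lam (\rank U) (fun a => row_base U *m ract M a *m pinvmx (row_base U)).

Section Subrmod.
Variables (M : rmod Lam) (k : nat) (U : 'M[F]_(k, rdim M)).
Hypothesis sU : submod U.

Lemma row_base_hom : mod_hom (row_base U : 'M_(rdim (subrmod U), rdim M)).
Proof.
move=> a /=; rewrite mulmxKpV // eq_row_base.
by apply: submx_trans (sU a); apply: submxMr; rewrite eq_row_base.
Qed.

Lemma subrmod_rmod : is_rmod M -> is_rmod (subrmod U).
Proof.
case=> [lin act1 actM]; split => /=.
- by move=> c a b; rewrite lin mulmxDr mulmxDl -scalemxAr -scalemxAl.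
- by rewrite act1 mulmx1 mulmxVp ?row_base_free.
- move=> a b; have hom := row_base_hom a; rewrite /= in hom.
  by rewrite actM [RHS]mulmxA [_ *m (row_base U *m _)]mulmxA hom !mulmxA.
Qed.

Lemma subrmod_sq_iso : sq_iso (subrmod U) M U (0 : 'M_(rdim M)) (row_base U).
Proof.
split.
- by move=> a; rewrite row_base_hom subrr sub0mx.
- by rewrite !addsmx0 !eq_row_base submx_refl.
- by rewrite addsmx0 eq_row_base mxrank0 addn0.
Qed.

End Subrmod.

Lemma sq_iso0_unique N N' M k (U : 'M[F]_(k, rdim M)) h h' :
  sq_iso N M U (0 : 'M_(rdim M)) h -> sq_iso N' M U (0 : 'M_(rdim M)) h' ->
  exists phi, sq_iso N N' (1%:M : 'M_(rdim N')) (0 : 'M_(rdim N')) phi.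
Proof.
move=> si si'; apply: (sq_isoMr_lift (f := h')).
- exact: sq_iso0_hom si'.
- exact: submod1.
- exact: sub0mx.
- by rewrite (sq_iso0_kermx si') capmx0 sub0mx.
apply: sq_iso_eqmx si; first by rewrite mul1mx; apply: eqmx_sym; exact: sq_iso0_eqmx si'.
by rewrite mul0mx; apply: eqmx_sym; apply: eqmx0.
Qed.

End Constructions.

Section Additive.
Variables (F : fieldType) (Lam : falgType F) (R : realType) (theta : rmod Lam -> R).
Hypothesis addf : additive_fun theta.
Implicit Types (M N X Y K : rmod Lam).

Lemma theta_rmod0 : theta (rmod0 Lam) = 0.
Proof.
have si0 : sq_iso (rmod0 Lam) (rmod0 Lam) (0 : 'M[F]_(0, 0)) (0 : 'M_0) 0.
  by split => *; rewrite ?sub0col ?mxrank0col.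
have si1 : sq_iso (rmod0 Lam) (rmod0 Lam) 1%:M (0 : 'M_(0, 0)) 0.
  by split => *; rewrite ?sub0col ?mxrank0col.
have r0 := rmod0_rmod Lam.
have e := addf r0 r0 r0 (fun a => sub0col _ _) si0 si1.
by apply: (addrI (theta (rmod0 Lam))); rewrite addr0 -e.
Qed.

Lemma theta_iso N M (phi : 'M[F]_(rdim N, rdim M)) : is_rmod N -> is_rmod M ->
  sq_iso N M 1%:M (0 : 'M_(rdim M)) phi -> theta N = theta M.
Proof.
move=> rN rM si.
have si0 : sq_iso (rmod0 Lam) M 1%:M 1%:M (0 : 'M_(0, rdim M)).
  by split => [a||]; rewrite ?submx1 ?adds0mx ?submx_refl.
have := addf rM rN (rmod0_rmod Lam) (@submod1 _ _ M) si si0.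
by rewrite theta_rmod0 addr0.
Qed.

Lemma theta_dim0 N : is_rmod N -> rdim N = 0%N -> theta N = 0.
Proof.
move=> rN dN; rewrite -theta_rmod0; apply/esym/(@theta_iso _ _ 0) => //.
  exact: rmod0_rmod.
split => [a||]; rewrite ?mulmx0 ?mul0mx ?subrr ?sub0mx //.
- by rewrite submx1 /= sub1mx /row_full addsmx0 mxrank0 dN.
- by rewrite addsmx0 !mxrank0.
Qed.

Lemma theta_sub N M k (U : 'M[F]_(k, rdim M)) h : is_rmod N -> is_rmod M ->
  sq_iso N M U (0 : 'M_(rdim M)) h -> theta N = theta (subrmod U).
Proof.
move=> rN rM si; have sU := sq_iso0_submod si.
have [phi si'] := sq_iso0_unique si (subrmod_sq_iso sU).
exact: theta_iso rN (subrmod_rmod sU rM) si'.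
Qed.

Lemma theta_quot N M k (U : 'M[F]_(k, rdim M)) g : is_rmod N -> is_rmod M ->
  submod U -> sq_iso N M 1%:M U g -> theta N = theta M - theta (subrmod U).
Proof.
move=> rN rM sU si.
by rewrite (addf rM (subrmod_rmod sU rM) rN sU (subrmod_sq_iso sU) si) addrAC subrr add0r.
Qed.

End Additive.

Section TorsionClass.
Variables (F : fieldType) (Lam : falgType F) (G : rmod Lam -> Prop).
Hypothesis tc : torsion_class G.
Implicit Types (M N X Y K : rmod Lam).

Lemma inG_eqmx M k l k' l' (U : 'M[F]_(k, rdim M)) (V : 'M_(l, rdim M))
    (U' : 'M_(k', rdim M)) (V' : 'M_(l', rdim M)) :
  (U :=: U')%MS -> (V :=: V')%MS -> inG G M U V -> inG G M U' V'.
Proof.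
by move=> eU eV [N [f [rN GN si]]]; exists N, f; split => //; apply: sq_iso_eqmx si.
Qed.

Lemma inG0_sq_iso N M k (U : 'M[F]_(k, rdim M)) h : is_rmod N -> is_rmod M ->
  inG G M U (0 : 'M_(rdim M)) -> sq_iso N M U (0 : 'M_(rdim M)) h -> G N.
Proof.
move=> rN rM [N0 [f0 [rN0 GN0 si0]]] si.
have [phi si'] := sq_iso0_unique si0 si.
by case: tc => iso _ _; apply: iso si'.
Qed.

Lemma subrmod_G M k (U : 'M[F]_(k, rdim M)) : is_rmod M -> submod U ->
  inG G M U (0 : 'M_(rdim M)) -> G (subrmod U).
Proof.
move=> rM sU iU; apply: inG0_sq_iso iU (subrmod_sq_iso sU) => //.
exact: subrmod_rmod.
Qed.

Lemma inG_mulmxr X Y k l (f : 'M[F]_(rdim X, rdim Y)) (U : 'M_(k, rdim X))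
    (V : 'M_(l, rdim X)) :
  mod_hom f -> inG G X U V -> (U :&: kermx f <= V)%MS -> inG G Y (U *m f) (V *m f).
Proof.
by move=> hf [N [g [rN GN si]]] kerV; exists N, (g *m f); split => //; apply: sq_isoMr.
Qed.

Lemma inG_mulmxr_lift X Y k l (f : 'M[F]_(rdim X, rdim Y)) (U : 'M_(k, rdim X))
    (V : 'M_(l, rdim X)) :
  mod_hom f -> submod U -> (V <= U)%MS -> (U :&: kermx f <= V)%MS ->
  inG G Y (U *m f) (V *m f) -> inG G X U V.
Proof.
move=> hf sU VU kerV [N [g [rN GN si]]].
by have [h' si'] := sq_isoMr_lift hf sU VU kerV si; exists N, h'.
Qed.

Lemma inG0_of_G Y M k :
  is_rmod Y -> G Y -> inG G M (0 : 'M[F]_(k, rdim M)) (0 : 'M_(rdim M)).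
Proof.
move=> rY GY; case: tc => _ quo _.
have [Z [f [rZ GZ si]]] := quo Y _ _ rY GY (@submod1 _ _ Y).
have dZ : rdim Z = 0%N by have := sq_iso1_rank si; rewrite mxrank1; lia.
exists Z, 0; split => //; split => [a||].
- by rewrite mulmx0 mul0mx subrr sub0mx.
- by rewrite addsmx_sub !sub0mx.
- by rewrite addsmx0 !mxrank0 dZ.
Qed.

Lemma subobj_eqmx M k k' (U : 'M[F]_(k, rdim M)) (U' : 'M_(k', rdim M)) :
  (U :=: U')%MS -> subobj G U -> subobj G U'.
Proof. by move=> eU [sU iU]; split; [apply: submod_eqmx sU | apply: inG_eqmx iU]. Qed.

Lemma strict_sub_eqmx M k k' (U : 'M[F]_(k, rdim M)) (U' : 'M_(k', rdim M)) :
  (U :=: U')%MS -> strict_sub G U -> strict_sub G U'.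
Proof.
move=> eU [oU cU]; split => [|l B' oB']; first exact: subobj_eqmx oU.
by apply: inG_eqmx (cU l B' oB') => //; apply: cap_eqmx.
Qed.

Lemma strict_sub0 Y M k : is_rmod Y -> G Y -> strict_sub G (0 : 'M[F]_(k, rdim M)).
Proof.
move=> rY GY; split; first by split; [apply: submod0 | apply: inG0_of_G rY GY].
by move=> l B' _; rewrite cap0mx; apply: inG0_of_G rY GY.
Qed.

Lemma subobj1 M : is_rmod M -> G M -> subobj G (1%:M : 'M[F]_(rdim M)).
Proof.
move=> rM GM; split; first exact: submod1.
exists M, 1%:M; split => //; split => [a||].
- by rewrite mulmx1 mul1mx subrr sub0mx.
- by rewrite !addsmx0 submx_refl.
- by rewrite addsmx0 mxrank1 mxrank0 addn0.
Qed.

Lemma strict_sub1 M : is_rmod M -> G M -> strict_sub G (1%:M : 'M[F]_(rdim M)).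
Proof.
move=> rM GM; split => [|l B' [_ iB']]; first exact: subobj1.
by apply: inG_eqmx iB' => //; apply: eqmx_sym; apply/capmx_idPr; apply: submx1.
Qed.

End TorsionClass.

Section Strictness.
Variables (F : fieldType) (Lam : falgType F) (G : rmod Lam -> Prop).
Hypothesis tc : torsion_class G.
Implicit Types (M N X Y K : rmod Lam).

Lemma inG_image X Y l (B : 'M[F]_(l, rdim X)) (f : 'M_(rdim X, rdim Y)) :
  is_rmod X -> mod_hom f -> subobj G B -> inG G Y (B *m f) (0 : 'M_(rdim Y)).
Proof.
move=> rX hf [sB iB]; case: (tc) => _ quo _.
set rb := row_base B; have freeb : row_free rb := row_base_free B.
have hb : mod_hom (rb : 'M_(rdim (subrmod B), rdim X)) := row_base_hom sB.
have Krb : (B :&: kermx f <= rb)%MS by rewrite eq_row_base capmxSl.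
set W : 'M_(rdim X, rdim (subrmod B)) := (B :&: kermx f)%MS *m pinvmx rb.
have eW : W *m rb = (B :&: kermx f)%MS by rewrite mulmxKpV.
have sW : submod W.
  exact: submod_pinvmx hb freeb (submod_cap sB (submod_kermx hf)) Krb.
(* The image of [B] is the quotient of [B] by [B :&: kermx f]. *)
have iW := quo _ _ W (subrmod_rmod sB rX) (subrmod_G tc rX sB iB) sW.
have iWX := inG_mulmxr hb iW (capmx_kermx_free _ _ freeb).
have kerW : (1%:M *m rb :&: kermx f <= W *m rb)%MS.
  by rewrite mul1mx eW capmxS ?eq_row_base.
apply: inG_eqmx (inG_mulmxr hf iWX kerW).
- by rewrite mul1mx; apply: eqmxMr; apply: eq_row_base.
- rewrite eW; have -> : (B :&: kermx f)%MS *m f = 0 by apply/sub_kermxP; apply: capmxSr.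
  exact: eqmx0.
Qed.

Lemma inG_extension X k l (D : 'M[F]_(k, rdim X)) (V : 'M_(l, rdim X)) :
  is_rmod X -> submod D -> submod V -> (V <= D)%MS ->
  inG G X D V -> inG G X V (0 : 'M_(rdim X)) -> inG G X D (0 : 'M_(rdim X)).
Proof.
move=> rX sD sV VD iDV iV; case: (tc) => _ _ ext.
set rb := row_base D; have freeb : row_free rb := row_base_free D.
have hb : mod_hom (rb : 'M_(rdim (subrmod D), rdim X)) := row_base_hom sD.
have Vb : (V <= rb)%MS by rewrite eq_row_base.
set U : 'M_(l, rdim (subrmod D)) := V *m pinvmx rb.
have eU : U *m rb = V by rewrite mulmxKpV.
have sU : submod U := submod_pinvmx hb freeb sV Vb.
have iU : inG G (subrmod D) U (0 : 'M_(rdim (subrmod D))).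
  apply: (inG_mulmxr_lift hb sU (sub0mx _ _) (capmx_kermx_free _ _ freeb)).
  apply: inG_eqmx iV; first by rewrite eU.
  by rewrite mul0mx; apply: eqmx_sym; apply: eqmx0.
have iU1 : inG G (subrmod D) 1%:M U.
  apply: (inG_mulmxr_lift hb (@submod1 _ _ _) (submx1 _) (capmx_kermx_free _ _ freeb)).
  apply: inG_eqmx iDV; last by rewrite eU.
  by rewrite mul1mx; apply: eqmx_sym; apply: eq_row_base.
exists (subrmod D), rb; split; last exact: subrmod_sq_iso.
- exact: subrmod_rmod.
- exact: ext (subrmod_rmod sD rX) sU iU iU1.
Qed.

Lemma strict_sub_trans N M k (A : 'M[F]_(k, rdim M)) h k' (A' : 'M_(k', rdim N)) :
  sq_iso N M A (0 : 'M_(rdim M)) h ->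
  strict_sub G A -> strict_sub G A' -> strict_sub G (A' *m h).
Proof.
move=> si [_ strA] [[sA' iA'] strA'].
have hh := sq_iso0_hom si; have freeh := sq_iso0_row_free si.
have eA := sq_iso0_eqmx si.
split.
  split; first exact: submod_mulmxr hh sA'.
  apply: inG_eqmx (inG_mulmxr hh iA' (capmx_kermx_free _ _ freeh)) => //.
  by rewrite mul0mx; apply: eqmx0.
move=> l B' oB'; set C := (A :&: B')%MS.
have Ch : (C <= h)%MS by rewrite eA capmxSl.
set Cp := C *m pinvmx h; have eCp : Cp *m h = C by rewrite mulmxKpV.
have sCp : submod Cp := submod_pinvmx hh freeh (submod_cap (sq_iso0_submod si) oB'.1) Ch.
have iCp : inG G N Cp (0 : 'M_(rdim N)).
  apply: (inG_mulmxr_lift hh sCp (sub0mx _ _) (capmx_kermx_free _ _ freeh)).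
  apply: inG_eqmx (strA l B' oB'); first by rewrite eCp.
  by rewrite mul0mx; apply: eqmx_sym; apply: eqmx0.
have := inG_mulmxr hh (strA' _ _ (conj sCp iCp)) (capmx_kermx_free _ _ freeh).
apply: inG_eqmx; last by rewrite mul0mx; apply: eqmx0.
have A'hA : (A' *m h <= A)%MS by rewrite -eA submxMl.
have eC : (A' *m h :&: Cp *m h :=: A' *m h :&: B')%MS.
  apply/eqmxP; rewrite eCp !sub_capmx !capmxSl (submx_trans (capmxSr _ _) (capmxSr _ _)).
  by rewrite capmxSr (submx_trans (capmxSl _ _) A'hA).
exact: eqmx_trans (capmxMfree A' Cp freeh) eC.
Qed.

End Strictness.

Section Quotients.
Variables (F : fieldType) (Lam : falgType F) (G : rmod Lam -> Prop).
Implicit Types (M N X Y K : rmod Lam).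

Lemma sq_iso_quotient_map X N0 k (A : 'M[F]_(k, rdim X)) g :
  submod A -> sq_iso N0 X 1%:M A g ->
  exists q : 'M_(rdim X, rdim N0),
    [/\ mod_hom q, (kermx q :=: A)%MS, g *m q = 1%:M & (1%:M - q *m g <= A)%MS].
Proof.
move=> sA [hom /eqmxP egA rk].
have [q [gq Aq qgA]] := complement_projection egA rk.
have Aker : (A <= kermx q)%MS by apply/sub_kermxP.
have killA m (Z : 'M_(m, rdim X)) : (Z <= A)%MS -> Z *m q = 0.
  by move=> ZA; apply/sub_kermxP; apply: submx_trans ZA Aker.
exists q; split => //.
- move=> a.
  have := killA _ _ (submx_trans (submxMr _ qgA) (sA a)).
  rewrite !mulmxBl mul1mx => /eqP; rewrite subr_eq0 => /eqP ->.
  have /eqP := killA _ _ (hom a).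
  rewrite mulmxBl -[ract N0 a *m g *m q]mulmxA gq mulmx1 subr_eq0 => /eqP e.
  by rewrite -!mulmxA [g *m (_ *m q)]mulmxA -e.
- apply/eqmxP; rewrite Aker andbT.
  have -> : kermx q = kermx q *m (1%:M - q *m g).
    by rewrite mulmxBr mulmx1 mulmxA mulmx_ker mul0mx subr0.
  exact: mulmx_sub.
Qed.

Hypothesis tc : torsion_class G.

Lemma strict_sub_preimage X N0 k (A : 'M[F]_(k, rdim X)) g
    (q : 'M_(rdim X, rdim N0)) kc (C : 'M_(kc, rdim N0)) :
  is_rmod X -> G X -> strict_sub G A -> sq_iso N0 X 1%:M A g ->
  mod_hom q -> (kermx q :=: A)%MS -> g *m q = 1%:M -> (1%:M - q *m g <= A)%MS ->
  strict_sub G C -> strict_sub G (C *m g + A)%MS.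
Proof.
move=> rX GX [[sA _] strA] [hom _ _] hq eK gq qgA [[sC _] strC].
have Aq : A *m q = 0 by apply/sub_kermxP; rewrite eK.
set B := (C *m g + A)%MS; have AB : (A <= B)%MS by apply: addsmxSr.
have sB : submod B.
  move=> a; rewrite addsmxMr addsmx_sub (submx_trans (sA a) AB) andbT -mulmxA.
  have -> : g *m ract X a = ract N0 a *m g - (ract N0 a *m g - g *m ract X a).
    by rewrite opprB addrC subrK.
  rewrite mulmxBr addmx_sub ?eqmx_opp ?(submx_trans (mulmx_sub _ (hom a)) AB) //.
  by apply: submx_trans (addsmxSl _ _); rewrite mulmxA submxMr ?sC.
have BB' l (B' : 'M_(l, rdim X)) : subobj G B' -> inG G X (B :&: B')%MS (0 : 'M_(rdim X)).
  move=> oB'; set D := (B :&: B')%MS; have sD := submod_cap sB oB'.1.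
  have iCB'q := strC _ _ (conj (submod_mulmxr hq oB'.1) (inG_image tc rX hq oB')).
  have DAq : (D :&: A)%MS *m q = 0 by apply/sub_kermxP; rewrite eK capmxSr.
  (* [q] carries [D / (D :&: A)] onto [C :&: B' *m q]. *)
  have iDDA : inG G X D (D :&: A)%MS.
    apply: (inG_mulmxr_lift hq sD (capmxSl _ _)); first by apply: capmxS; rewrite ?eK.
    apply: inG_eqmx iCB'q; first exact: eqmx_sym (capmx_preimage C B' gq Aq qgA).
    by rewrite DAq; apply: eqmx_sym; apply: eqmx0.
  have iDA : inG G X (D :&: A)%MS (0 : 'M_(rdim X)).
    apply: inG_eqmx (strA l B' oB') => //; apply/eqmxP.
    rewrite /D !sub_capmx !capmxSl !capmxSr (submx_trans (capmxSl _ _) AB) /=.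
    exact: submx_trans (capmxSl _ _) (capmxSr _ _).
  exact: (inG_extension tc rX sD (submod_cap sD sA) (capmxSl _ _) iDDA iDA).
split=> //; split => //.
by apply: inG_eqmx (BB' _ _ (subobj1 rX GX)) => //; apply/capmx_idPl; apply: submx1.
Qed.

End Quotients.

Section Stability.
Variables (F : fieldType) (Lam : falgType F) (G : rmod Lam -> Prop).
Variables (R : realType) (theta : rmod Lam -> R).
Hypothesis tc : torsion_class G.
Hypothesis addf : additive_fun theta.
Implicit Types (M N X Y K : rmod Lam).

Lemma strict_morph_P_Qbar_eq0 X Y (f : 'M[F]_(rdim X, rdim Y)) :
  is_rmod X -> Pcl G theta X -> Qbar G theta Y -> strict_morph G f -> f = 0.
Proof.
move=> rX [_ PX] [_ QY] [GX _ hf sK sI].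
case: PX => [dX | PX].
  by apply/eqP; rewrite -mxrank_eq0 -leqn0 (leq_trans (rank_leq_row f)) ?dX.
apply/eqP/negPn/negP => nz.
have nfK : ~~ row_full (kermx f).
  by apply: contra nz => fullK; rewrite -[f]mul1mx; apply/eqP/sub_kermxP; rewrite sub1mx.
case: tc => _ quo _.
have [N [g [rN _ si]]] := quo X _ (kermx f) rX GX sK.1.1.
have siN : sq_iso N Y f (0 : 'M_(rdim Y)) (g *m f).
  apply: sq_iso_eqmx (sq_isoMr hf si (capmxSr _ _)); first by rewrite mul1mx.
  by rewrite mulmx_ker; apply: eqmx0.
by have := QY _ f sI N _ rN siN; rewrite leNgt (PX _ _ sK nfK N g rN si).
Qed.

Lemma Pcl_of_sub_le0 N : is_rmod N -> G N -> 0 < theta N ->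
  (forall k (A : 'M[F]_(k, rdim N)), strict_sub G A -> ~~ row_full A ->
     theta (subrmod A) <= 0) ->
  Pcl G theta N.
Proof.
move=> rN GN pos subA; split=> //; right=> k A sA nfA N' f rN' si.
by rewrite (theta_quot addf rN' rN sA.1.1 si) subr_gt0 (le_lt_trans (subA _ _ sA nfA)).
Qed.

Lemma Qbar_of_quot_gt0 N : is_rmod N -> G N -> theta N <= 0 ->
  (forall k (C : 'M[F]_(k, rdim N)), strict_sub G C -> C != 0 -> ~~ row_full C ->
     forall N2 f, is_rmod N2 -> sq_iso N2 N 1%:M C f -> 0 < theta N2) ->
  Qbar G theta N.
Proof.
move=> rN GN le0 quoC; split=> // k C sC N1 f1 rN1 si1.
have sCm := sC.1.1; case: (tc) => _ quo _.
have [N2 [f2 [rN2 _ si2]]] := quo N _ C rN GN sCm.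
have e1 := theta_sub addf rN1 rN si1; have e2 := theta_quot addf rN2 rN sCm si2.
have rk2 := sq_iso1_rank si2.
have [C0 | nzC] := eqVneq C 0.
  by rewrite theta_dim0 // -(sq_iso0_rank si1) C0 mxrank0.
have [fullC | nfC] := boolP (row_full C).
  have d2 : rdim N2 = 0%N by move: rk2 fullC; rewrite /row_full; lia.
  by rewrite theta_dim0 // in e2; rewrite e1; lra.
by have := quoC _ _ sC nzC nfC N2 f2 rN2 si2; rewrite e1 e2; lra.
Qed.

Lemma perp_sub_theta_le0 Y : is_rmod Y -> perp G (Pcl G theta) Y ->
  forall k (A : 'M[F]_(k, rdim Y)), strict_sub G A ->
  forall N h, is_rmod N -> sq_iso N Y A (0 : 'M_(rdim Y)) h -> theta N <= 0.
Proof.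
move=> rY [GY perpY] k A; move: {2}(\rank A).+1 (ltnSn (\rank A)) => n.
elim: n k A => // n IH k A rkA sA N h rN si.
rewrite leNgt; apply/negP => pos.
have GN := inG0_sq_iso tc rN rY sA.1.2 si.
have hh := sq_iso0_hom si; have freeh := sq_iso0_row_free si.
(* Proper strict subobjects of [N] are strict subobjects of [Y] of smaller rank. *)
have PN : Pcl G theta N.
  apply: Pcl_of_sub_le0 => // k' A' sA' nfA'; have sA'm := sA'.1.1.
  have siA' := sq_iso0_trans si (subrmod_sq_iso sA'm).
  apply: (IH _ _ _ (strict_sub_trans si sA sA') _ _ (subrmod_rmod sA'm rN) siA').
  rewrite mxrankMfree // -ltnS (leq_trans _ rkA) // ltnS (sq_iso0_rank si).
  by rewrite ltn_neqAle rank_leq_col andbT.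
have sh : strict_morph G h.
  split=> //; first by rewrite (sq_iso0_kermx si); apply: strict_sub0 rY GY.
  exact: strict_sub_eqmx (eqmx_sym (sq_iso0_eqmx si)) sA.
move: freeh; rewrite /row_free (perpY N h rN PN sh) mxrank0 eq_sym => /eqP dN.
by move: pos; rewrite theta_dim0 ?ltxx.
Qed.

Lemma lperp_quot_theta_gt0 X : is_rmod X -> lperp G (Qbar G theta) X ->
  forall k (A : 'M[F]_(k, rdim X)), strict_sub G A -> ~~ row_full A ->
  forall N f, is_rmod N -> sq_iso N X 1%:M A f -> 0 < theta N.
Proof.
move=> rX [GX lperpX] k A.
move: {2}(rdim X - \rank A)%N.+1 (ltnSn (rdim X - \rank A)) => n.
elim: n k A => // n IH k A codimA sA nfA N f rN si.
rewrite ltNge; apply/negP => le0; have sAm := sA.1.1.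
case: (tc) => _ quo _; have [N0 [g [rN0 GN0 si0]]] := quo X _ A rX GX sAm.
have eN0 : theta N0 = theta N.
  by rewrite (theta_quot addf rN0 rX sAm si0) (theta_quot addf rN rX sAm si).
have [q [hq eK gq qgA]] := sq_iso_quotient_map sAm si0.
have rk0 := sq_iso1_rank si0.
have fullq : row_full q.
  by rewrite /row_full eqn_leq rank_leq_col -{1}(mxrank1 F (rdim N0)) -gq mxrankM_maxr.
(* Proper nonzero strict subobjects of [N0] have strict preimages in [X] of smaller
   codimension. *)
have QN0 : Qbar G theta N0.
  apply: Qbar_of_quot_gt0 => //; first by rewrite eN0.
  move=> kc C sC nzC nfC N2 f2 rN2 si2.
  have sB := strict_sub_preimage tc rX GX sA si0 hq eK gq qgA sC.
  set B := (C *m g + A)%MS in sB.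
  have eBq : (B *m q :=: C)%MS.
    rewrite /B; apply: eqmx_trans (addsmxMr _ _ _) _.
    rewrite -mulmxA gq mulmx1 (sub_kermxP (_ : A <= kermx q)%MS) ?eK //.
    exact: addsmx0.
  have [h2 siB] : exists h2, sq_iso N2 X 1%:M B h2.
    apply: (sq_isoMr_lift hq (@submod1 _ _ X) (submx1 _)).
      by apply: submx_trans (capmxSr _ _) _; rewrite eK addsmxSr.
    apply: (sq_iso_eqmx _ (eqmx_sym eBq) si2).
    by rewrite mul1mx; apply/eqmxP; rewrite submx1 sub1mx fullq.
  have rkC : (0 < \rank C)%N by rewrite lt0n mxrank_eq0.
  have rkB := sq_iso1_rank siB; have rk2 := sq_iso1_rank si2.
  apply: (IH _ B _ sB _ N2 h2 rN2 siB); move: nfA nfC; rewrite /row_full; lia.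
have sq : strict_morph G q.
  split=> //; first exact: strict_sub_eqmx (eqmx_sym eK) sA.
  apply: strict_sub_eqmx (strict_sub1 rN0 GN0).
  by apply/eqmxP; rewrite submx1 sub1mx fullq.
move: gq; rewrite (lperpX N0 q rN0 QN0 sq) mulmx0 => /(congr1 mxrank).
by rewrite mxrank0 mxrank1; move: nfA; rewrite /row_full; lia.
Qed.

Lemma Qcl_Qbar M : is_rmod M -> Qcl G theta M -> Qbar G theta M.
Proof.
move=> rM [GM QM]; split=> // k A sA N f rN si; have rk := sq_iso0_rank si.
case: QM => [dM | QM]; first by rewrite theta_dim0 //; move: (rank_leq_col A); lia.
have [A0 | nzA] := eqVneq A 0; first by rewrite theta_dim0 // -rk A0 mxrank0.
exact: ltW (QM _ _ sA nzA N f rN si).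
Qed.

Lemma Qbar_strict_sub M N k (A : 'M[F]_(k, rdim M)) h : is_rmod N -> is_rmod M ->
  Qbar G theta M -> strict_sub G A -> sq_iso N M A (0 : 'M_(rdim M)) h ->
  Qbar G theta N.
Proof.
move=> rN rM [_ QM] sA si; split; first exact: (inG0_sq_iso tc rN rM sA.1.2 si).
move=> k' A' sA' N' f' rN' si'.
exact: QM _ _ (strict_sub_trans si sA sA') N' _ rN' (sq_iso0_trans si si').
Qed.

Lemma Qbar_Qcl M : (forall X, is_rmod X -> Wcl G theta X -> rdim X = 0%N) ->
  is_rmod M -> Qbar G theta M -> Qcl G theta M.
Proof.
move=> W0 rM QbM; split; first exact: QbM.1.
right=> k A sA nzA N f rN si.
rewrite lt_neqAle (QbM.2 _ A sA N f rN si) andbT.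
apply: contra nzA => /eqP t0; rewrite -mxrank_eq0 (sq_iso0_rank si).
by rewrite (W0 N rN (conj (Qbar_strict_sub rN rM QbM sA si) t0)).
Qed.

End Stability.

Unset Implicit Arguments.

Theorem mainTheorem13 (F : fieldType) (Lam : falgType F)
  (G : rmod Lam -> Prop) (R : realType) (theta : rmod Lam -> R) :
  torsion_class G -> additive_fun theta ->
  [/\ (forall M : rmod Lam, is_rmod M ->
         (perp G (Pcl G theta) M <-> Qbar G theta M)),
      (forall M : rmod Lam, is_rmod M ->
         (lperp G (Qbar G theta) M <-> Pcl G theta M))
    & ((forall X : rmod Lam, is_rmod X -> Wcl G theta X -> rdim X = 0%N) ->
       [/\ (forall M : rmod Lam, is_rmod M -> (Qbar G theta M <-> Qcl G theta M)),
           (forall M : rmod Lam, is_rmod M ->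
              (Qcl G theta M <-> perp G (Pcl G theta) M))
         & (forall M : rmod Lam, is_rmod M ->
              (Pcl G theta M <-> lperp G (Qcl G theta) M))])].
Proof.
move=> tc addf.
have perpP M : is_rmod M -> perp G (Pcl G theta) M <-> Qbar G theta M.
  move=> rM; split=> [pM | QM].
    by split; [exact: pM.1 | exact: (perp_sub_theta_le0 tc addf rM pM)].
  split=> [|X f rX PX sf]; first exact: QM.1.
  exact: (strict_morph_P_Qbar_eq0 tc rX PX QM sf).
have lperpQbar M : is_rmod M -> lperp G (Qbar G theta) M <-> Pcl G theta M.
  move=> rM; split=> [lM | PM].
    by split; [exact: lM.1 | right; exact: (lperp_quot_theta_gt0 tc addf rM lM)].
  split=> [|Y f rY QY sf]; first exact: PM.1.
  exact: (strict_morph_P_Qbar_eq0 tc rM PM QY sf).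
split=> // W0.
have QbarQ M : is_rmod M -> Qbar G theta M <-> Qcl G theta M.
  by move=> rM; split; [exact: (Qbar_Qcl tc W0 rM) | exact: (Qcl_Qbar addf rM)].
split=> M rM; first exact: QbarQ.
  by rewrite perpP //; apply: iff_sym (QbarQ M rM).
rewrite -lperpQbar //; split=> -[GM lM]; split=> // Y f rY QY.
- exact: lM rY (proj2 (QbarQ Y rY) QY).
- exact: lM rY (proj1 (QbarQ Y rY) QY).
Qed.
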